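(* Let $\mathfrak{S}$ be a labelled sequent. Any label phase started on $\mathfrak{S}$ terminates and yields a finite derivation (with root $\mathfrak{S}$) whose leaves are label saturated.
   Context: Formulas: fix a countable set $\mathtt{Prop}$ of propositional atoms; formulas are generated by $A ::= \bot \mid p \mid A \to A \mid \Box A \mid \triangle A$ with $p \in \mathtt{Prop}$. Labelled sequents: fix a countable set $\mathtt{Lab}$ of labels. A labelled formula is $x:A$ with $x\in\mathtt{Lab}$ and $A$ a formula; a relational atom is $xRy$ or $xSy$ with $x,y \in \mathtt{Lab}$. A sequent $\mathcal{R},\Gamma\Rightarrow\Omega$ consists of a finite multiset $\mathcal{R}$ of relational atoms and finite multisets $\Gamma,\Omega$ of labelled formulas; commas denote multiset union. Rules used (premiss above, conclusion below): ($\Box$R) from $\mathcal{R},xRy,\Gamma\Rightarrow y:A,\Omega$ infer $\mathcal{R},\Gamma\Rightarrow x:\Box A,\Omega$, provided $y$ does not occur in the conclusion; ($\triangle$R) from $\mathcal{R},xSy,\Gamma\Rightarrow y:A,\Omega$ infer $\mathcal{R},\Gamma\Rightarrow x:\triangle A,\Omega$, provided $y$ does not occur in the conclusion. Label phase: starting from a sequent, repeatedly apply the rules $\Box$R and $\triangle$R bottom-up to the leaves for as long as possible. A sequent is label saturated if neither $\Box$R nor $\triangle$R can be applied to it, i.e. its succedent $\Omega$ contains no labelled formula of the form $x:\Box A$ or $x:\triangle A$. *)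

From Stdlib Require Import List Permutation Relations.
Import ListNotations.

Definition atom := nat.
Definition label := nat.

Inductive form : Type :=
| Bot : form
| Var : atom -> form
| Imp : form -> form -> form
| Box : form -> form
| Tri : form -> form.

Definition lform : Type := (label * form)%type.

Inductive ratom : Type :=
| RAt : label -> label -> ratom
| SAt : label -> label -> ratom.

(* A sequent R, Gamma => Omega; finite multisets are represented by lists,
   considered up to permutation (see [step]). *)
Record sequent : Type := Seq {
  rels : list ratom;
  ant  : list lform;
  suc  : list lform
}.

Definition ratom_has (y : label) (r : ratom) : Prop :=
  match r with RAt a b | SAt a b => a = y \/ b = y end.

Definition occurs (y : label) (S : sequent) : Prop :=
  (exists r, In r (rels S) /\ ratom_has y r) \/
  (exists A, In (y, A) (ant S)) \/
  (exists A, In (y, A) (suc S)).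

Definition boxR_step (S S' : sequent) : Prop :=
  exists x y A Om,
    Permutation (suc S) ((x, Box A) :: Om) /\
    ~ occurs y S /\
    Permutation (rels S') (RAt x y :: rels S) /\
    Permutation (ant S') (ant S) /\
    Permutation (suc S') ((y, A) :: Om).

Definition triR_step (S S' : sequent) : Prop :=
  exists x y A Om,
    Permutation (suc S) ((x, Tri A) :: Om) /\
    ~ occurs y S /\
    Permutation (rels S') (SAt x y :: rels S) /\
    Permutation (ant S') (ant S) /\
    Permutation (suc S') ((y, A) :: Om).

(* A step of the label phase: S' is the premise of a BoxR or TriR
   application (read bottom-up) whose conclusion is S. *)
Definition step (S S' : sequent) : Prop := boxR_step S S' \/ triR_step S S'.

Definition label_saturated (S : sequent) : Prop :=
  forall x A, ~ In (x, Box A) (suc S) /\ ~ In (x, Tri A) (suc S).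

From Stdlib Require Import List Permutation Relations Wf_nat Lia.
Import ListNotations.

(* Termination: a step replaces [x : Box A] or [x : Tri A] in the succedent
   by [y : A], so the total size of the succedent formulas strictly
   decreases.  Saturation of the leaves: only finitely many labels occur in
   a sequent, so a fresh label always exists, and a succedent formula
   [x : Box A] or [x : Tri A] would therefore still admit a step. *)

Fixpoint form_size (A : form) : nat :=
  match A with
  | Bot | Var _ => 1
  | Imp A B => S (form_size A + form_size B)
  | Box A | Tri A => S (form_size A)
  end.

Definition lforms_size (l : list lform) : nat :=
  list_sum (map (fun xA => form_size (snd xA)) l).

Lemma lforms_size_perm (l l' : list lform) :
  Permutation l l' -> lforms_size l = lforms_size l'.
Proof.
  intros Hperm; unfold lforms_size.
  apply Permutation_list_sum, Permutation_map, Hperm.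
Qed.

Lemma step_suc_size_lt (S S' : sequent) :
  step S S' -> lforms_size (suc S') < lforms_size (suc S).
Proof.
  intros [Hstep | Hstep]; destruct Hstep as (x & y & A & Om & Hsuc & _ & _ & _ & Hsuc');
    rewrite (lforms_size_perm _ _ Hsuc), (lforms_size_perm _ _ Hsuc');
    cbn; lia.
Qed.

Lemma well_founded_transp_step : well_founded (transp sequent step).
Proof.
  apply (well_founded_lt_compat _ (fun S => lforms_size (suc S))).
  intros S' S; apply step_suc_size_lt.
Qed.

Definition ratom_labels (r : ratom) : list label :=
  match r with RAt a b | SAt a b => [a; b] end.

Definition labels (S : sequent) : list label :=
  flat_map ratom_labels (rels S) ++ map fst (ant S) ++ map fst (suc S).

Lemma occurs_in_labels (y : label) (S : sequent) : occurs y S -> In y (labels S).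
Proof.
  unfold labels; intros [(r & Hr & Hy) | [(A & HA) | (A & HA)]];
    rewrite !in_app_iff.
  - left; apply in_flat_map; exists r; split; [exact Hr |].
    destruct r; cbn in *; tauto.
  - right; left; exact (in_map fst _ _ HA).
  - right; right; exact (in_map fst _ _ HA).
Qed.

Lemma exists_fresh_label (S : sequent) : exists y, ~ occurs y S.
Proof.
  exists (1 + list_max (labels S)); intros Hocc.
  assert (Hle : Forall (fun k => k <= list_max (labels S)) (labels S))
    by (apply list_max_le; constructor).
  rewrite Forall_forall in Hle.
  specialize (Hle _ (occurs_in_labels _ _ Hocc)); lia.
Qed.

Lemma In_Permutation_cons {T : Type} (a : T) (l : list T) :
  In a l -> exists l', Permutation l (a :: l').
Proof.
  intros Hin; destruct (in_split _ _ Hin) as (l1 & l2 & ->).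
  exists (l1 ++ l2); apply Permutation_sym, Permutation_middle.
Qed.

Lemma boxR_step_of_In (S : sequent) (x : label) (A : form) :
  In (x, Box A) (suc S) -> exists S', boxR_step S S'.
Proof.
  intros Hin; destruct (In_Permutation_cons _ _ Hin) as [Om Hsuc].
  destruct (exists_fresh_label S) as [y Hy].
  exists (Seq (RAt x y :: rels S) (ant S) ((y, A) :: Om)).
  exists x, y, A, Om; cbn; repeat split; auto.
Qed.

Lemma triR_step_of_In (S : sequent) (x : label) (A : form) :
  In (x, Tri A) (suc S) -> exists S', triR_step S S'.
Proof.
  intros Hin; destruct (In_Permutation_cons _ _ Hin) as [Om Hsuc].
  destruct (exists_fresh_label S) as [y Hy].
  exists (Seq (SAt x y :: rels S) (ant S) ((y, A) :: Om)).
  exists x, y, A, Om; cbn; repeat split; auto.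
Qed.

Lemma label_saturated_of_step_free (S : sequent) :
  (forall S', ~ step S S') -> label_saturated S.
Proof.
  intros Hfree x A; split; intros Hin.
  - destruct (boxR_step_of_In _ _ _ Hin) as [S' Hstep].
    exact (Hfree S' (or_introl Hstep)).
  - destruct (triR_step_of_In _ _ _ Hin) as [S' Hstep].
    exact (Hfree S' (or_intror Hstep)).
Qed.

Theorem lemma3 : forall S : sequent,
  Acc (fun S2 S1 => step S1 S2) S /\
  (forall S', clos_refl_trans sequent step S S' ->
     (forall S'', ~ step S' S'') -> label_saturated S').
Proof.
  intros S; split.
  - exact (well_founded_transp_step S).
  - intros S' _; apply label_saturated_of_step_free.
Qed.
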